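(* (1) Let $\bar B\in\mathbb F_q[X]^{(\ell+1)\times(\ell+1)}$ represent a basis of $\varphi(M_{s,\ell})$. If $\bar B\,\bar W_\ell$ is in weak Popov form, then one of the rows of $\bar B$ corresponds to a polynomial in $\varphi(M_{s,\ell})$ of minimal $(1,-1)$-weighted degree among its nonzero elements. (2) If $\bar B^{(0)},\dots,\bar B^{(\ell)}\in\mathbb F_q[X,Y]$ is a basis of $\varphi(M_{s,\ell})$, then $\bar B^{(0)},\dots,\bar B^{(\ell)},\,(L(X)Y)^{\ell-s+1}(Y-\bar R(X))^s$ is a basis of $\varphi(M_{s,\ell+1})$, and $\bar G(X)^{s+1},\,\bar B^{(0)}(Y-\bar R(X)),\dots,\bar B^{(\ell)}(Y-\bar R(X))$ is a basis of $\varphi(M_{s+1,\ell+1})$, where in each case $\varphi$ is the map for the corresponding parameters.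
   Context: Let $\mathbb F_q$ be a finite field, $1\le k<n<q$, $\alpha_0,\dots,\alpha_{n-1}$ distinct nonzero elements of $\mathbb F_q$, $w_0,\dots,w_{n-1}$ nonzero elements of $\mathbb F_q$, and $r\in\mathbb F_q^n$ with $r_i=0$ for $i=0,\dots,k-1$; $r_i'=r_i/w_i$. Let $G=\prod_{i=0}^{n-1}(X-\alpha_i)$, $R$ the unique polynomial of degree $<n$ with $R(\alpha_i)=r_i'$, $L=\prod_{i=0}^{k-1}(X-\alpha_i)$, $\bar G=G/L$, $\bar R=R/L$. For positive integers $s\le\ell$, $M_{s,\ell}$ is the $\mathbb F_q[X]$-module of all $Q\in\mathbb F_q[X,Y]$ of $Y$-degree at most $\ell$ such that for each $i$, $Q(X+\alpha_i,Y+r_i')$ has no monomials of total degree less than $s$; $\varphi(Q)=L(X)^{-s}Q(X,L(X)Y)$ (a polynomial) and $\varphi(M_{s,\ell})$ is its image. The $(1,-1)$-weighted degree of a nonzero bivariate polynomial is the maximum of $i-j$ over its monomials $X^iY^j$. A polynomial $\sum_tQ_t(X)Y^t$ has coefficient vector $(Q_0,Q_1,\dots)$; a matrix represents a basis if its rows are the coefficient vectors of the basis elements. $\bar W_\ell=\mathrm{diag}(X^\ell,X^{\ell-1},\dots,X,1)$. For $v\in\mathbb F_q[X]^m$, $\deg v=\max_i\deg v_i$ and $\mathrm{LP}(v)=\max\{i:\deg v_i=\deg v\}$; a matrix is in weak Popov form if its rows have pairwise different leading positions. *)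

From HB Require Import structures.
From mathcomp Require Import all_boot all_order all_algebra all_field.
Set Implicit Arguments. Unset Strict Implicit. Unset Printing Implicit Defensive.
Import Order.TTheory GRing.Theory Num.Theory.
Local Open Scope ring_scope.

(* Bivariate polynomials over F are elements of {poly {poly F}}:
   the outer variable is Y, coefficients are polynomials in X.
   Q = \sum_t Q`_t(X) Y^t, so the coefficient vector is (Q`_0, Q`_1, ...). *)

Section Defs.
Variable F : finFieldType.

Definition shiftXY (a b : F) (Q : {poly {poly F}}) : {poly {poly F}} :=
  map_poly (fun c : {poly F} => c \Po ('X + a%:P)) (Q \Po ('X + (b%:P)%:P)).

Definition no_low_monomials (s : nat) (Q : {poly {poly F}}) : Prop :=
  forall t j : nat, (t + j < s)%N -> (Q`_t)`_j = 0.

Definition inM (n : nat) (alpha rp : 'I_n -> F) (s l : nat)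
    (Q : {poly {poly F}}) : Prop :=
  (size Q <= l.+1)%N /\
  forall i : 'I_n, no_low_monomials s (shiftXY (alpha i) (rp i) Q).

Definition Lpoly (n k : nat) (alpha : 'I_n -> F) : {poly F} :=
  \prod_(i < n | (i < k)%N) ('X - (alpha i)%:P).

Definition Gpoly (n : nat) (alpha : 'I_n -> F) : {poly F} :=
  \prod_(i < n) ('X - (alpha i)%:P).

Definition phi (L : {poly F}) (s : nat) (Q : {poly {poly F}}) : {poly {poly F}} :=
  \poly_(t < size Q) ((Q`_t * L ^+ t) %/ L ^+ s).

Definition inPhiM (n k : nat) (alpha rp : 'I_n -> F) (s l : nat)
    (P : {poly {poly F}}) : Prop :=
  exists Q, inM alpha rp s l Q /\ P = phi (Lpoly k alpha) s Q.

Definition is_basis (P : {poly {poly F}} -> Prop) (m : nat)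
    (b : 'I_m -> {poly {poly F}}) : Prop :=
  [/\ forall i, P (b i),
      forall c : 'I_m -> {poly F},
        \sum_(i < m) (c i)%:P * b i = 0 -> forall i, c i = 0
    & forall Q, P Q -> exists c : 'I_m -> {poly F},
        Q = \sum_(i < m) (c i)%:P * b i].

Definition rowpoly (m m' : nat) (B : 'M[{poly F}]_(m, m')) (i : 'I_m)
  : {poly {poly F}} := \sum_(t < m') (B i t)%:P * 'X^t.

(* (1,-1)-weighted degree: max over monomials X^a Y^t of a - t
   (meaningful for nonzero Q; the start value -size Q is below every term) *)
Definition wdeg (Q : {poly {poly F}}) : int :=
  \big[Num.max/ - (size Q)%:Z]_(t < size Q | Q`_t != 0)
     ((size Q`_t)%:Z - 1 - (t : nat)%:Z).

(* deg v (via size, equivalent for leading positions of nonzero rows) *)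
Definition rowdeg (m m' : nat) (A : 'M[{poly F}]_(m, m')) (i : 'I_m) : nat :=
  \max_(j < m') size (A i j).

Definition LP (m m' : nat) (A : 'M[{poly F}]_(m, m')) (i : 'I_m) : nat :=
  \max_(j < m' | size (A i j) == rowdeg A i) (j : nat).

Definition weak_popov (m m' : nat) (A : 'M[{poly F}]_(m, m')) : Prop :=
  forall i1 i2 : 'I_m, LP A i1 = LP A i2 -> i1 = i2.

Definition Wbar (l : nat) : 'M[{poly F}]_l.+1 :=
  diag_mx (\row_(j < l.+1) 'X^(l - j)).

End Defs.

From HB Require Import structures.
From mathcomp Require Import all_boot all_order all_algebra all_field.
From mathcomp Require Import zify ring.
Set Implicit Arguments. Unset Strict Implicit. Unset Printing Implicit Defensive.
Import Order.TTheory GRing.Theory Num.Theory.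
Local Open Scope ring_scope.

(* (1) Column [j] of [B W_l] carries the weight [X^(l-j)], so the row degrees of
   [B W_l] are the (1,-1)-weighted degrees of the basis shifted by [l + 1].  A
   weak Popov matrix has the predictable degree property: a nonzero combination
   of its rows has row degree at least that of one of the rows involved.  So the
   row of least row degree has least weighted degree in the whole module.
   (2) As [L^s phi(Q) = Q(X, L Y)] and [(Y - R)(X, L Y) = L (Y - R/L)], it is
   enough to decompose [M_{s,l+1}] and [M_{s+1,l+1}]; membership in [M_{s,l}]
   says that each [Q(X + alpha_i, Y + r'_i)] lies in [(X, Y)^s].  Subtracting
   from [Q] in [M_{s,l+1}] its top [Y]-coefficient times the monic
   [Y^(l-s+1) (Y - R)^s] lands in [M_{s,l}]; and [Q] in [M_{s+1,l+1}] is
   [Q(X, R) + Q' (Y - R)] with [G^(s+1)] dividing [Q(X, R)] and [Q'] in [M_{s,l}]. *)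

Section PolyDvd.
Variable F : fieldType.

Lemma dvdp_XnP m (p : {poly F}) :
  reflect (forall j, (j < m)%N -> p`_j = 0) ('X^m %| p).
Proof.
rewrite /dvdp -Pdiv.IdomainMonic.take_poly_modp; apply: (iffP eqP) => [p0 j jm|p0].
  by have := coef_take_poly m p j; rewrite jm p0 coef0.
by apply/polyP=> j; rewrite coef_take_poly coef0; case: ltnP => // /p0.
Qed.

Lemma dvdp_sum (I : Type) (r : seq I) (P : pred I) (d : {poly F}) (f : I -> {poly F}) :
  (forall i, P i -> d %| f i) -> d %| \sum_(i <- r | P i) f i.
Proof. by move=> df; apply: (big_ind (dvdp d)); [exact: dvdp0 | exact: dvdp_add |]. Qed.

Lemma prod_XsubC_exp_dvdp (I : finType) (P : pred I) (a : I -> F) m p :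
  injective a -> (forall i, P i -> ('X - (a i)%:P) ^+ m %| p) ->
  (\prod_(i | P i) ('X - (a i)%:P)) ^+ m %| p.
Proof.
move=> inj_a dvd_p; rewrite -big_filter.
have: all P [seq i <- index_enum I | P i] by apply: filter_all.
have: uniq [seq i <- index_enum I | P i] by rewrite filter_uniq ?index_enum_uniq.
elim: [seq i <- _ | _] => [|i r IHr] /=; first by rewrite big_nil expr1n dvd1p.
case/andP=> i_r uniq_r /andP[Pi all_r]; rewrite big_cons exprMn Gauss_dvdp.
  by rewrite dvd_p ?IHr.
apply/coprimep_expl/coprimep_expr; rewrite coprimep_sym coprimep_XsubC.
by rewrite -(big_map a xpredT (fun x => 'X - x%:P)) root_prod_XsubC (mem_map inj_a).
Qed.

End PolyDvd.

Section VanishAtOrigin.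
Variable F : fieldType.
Local Notation P2 := {poly {poly F}}.

(* [Q] lies in the [m]-th power of the ideal (X, Y) of [F[X, Y]] *)
Definition vanish0 m (Q : P2) := forall t, 'X^(m - t) %| Q`_t.

Lemma vanish0_0 Q : vanish0 0 Q.
Proof. by move=> t; rewrite sub0n expr0 dvd1p. Qed.

Lemma vanish0D m P Q : vanish0 m P -> vanish0 m Q -> vanish0 m (P + Q).
Proof. by move=> vP vQ t; rewrite coefD dvdp_add. Qed.

Lemma vanish0N m P : vanish0 m P -> vanish0 m (- P).
Proof. by move=> vP t; rewrite coefN dvdpNr. Qed.

Lemma vanish0M m1 m2 P Q : vanish0 m1 P -> vanish0 m2 Q -> vanish0 (m1 + m2) (P * Q).
Proof.
move=> vP vQ t; rewrite coefM; apply: dvdp_sum => j _.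
apply: dvdp_trans (dvdp_mul (vP j) (vQ (t - j)%N)).
by rewrite -exprD dvdp_exp2l //; have := ltn_ord j; lia.
Qed.

Lemma vanish0X m P e : vanish0 m P -> vanish0 (m * e) (P ^+ e).
Proof.
move=> vP; elim: e => [|e IHe]; first by rewrite muln0; apply: vanish0_0.
by rewrite exprS mulnS; apply: vanish0M.
Qed.

Lemma vanish0C m c : 'X^m %| c -> vanish0 m c%:P.
Proof. by move=> dc [|t]; rewrite coefC ?subn0 ?dvdp0. Qed.

Lemma vanish0CM m c Q : vanish0 m Q -> vanish0 m (c%:P * Q).
Proof. by move=> vQ; rewrite -[m]add0n; apply: vanish0M => //; apply: vanish0_0. Qed.

Lemma vanish0_XsubC h : 'X %| h -> vanish0 1 ('X - h%:P).
Proof.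
move=> dh [|[|t]]; rewrite coefB coefX coefC /=.
- by rewrite sub0r subn0 expr1 dvdpNr.
- by rewrite subn1 expr0 dvd1p.
- by rewrite subr0 dvdp0.
Qed.

(* Coefficientwise, [P (Y - h)] vanishing to order [m+1] gives
   [P_t = (P (Y - h))_(t+1) + h P_(t+1)], and one descends on [m - t]. *)
Lemma vanish0_divXsubC m P h : 'X %| h -> vanish0 m.+1 (P * ('X - h%:P)) -> vanish0 m P.
Proof.
move=> dh vPh t; elim: {t}(m - t)%N {-2}t (leqnn (m - t)) => [|d IHd] t.
  by rewrite leqn0 => /eqP ->; rewrite expr0 dvd1p.
move=> mtd; have [mt|tm] := leqP m t; first by rewrite (eqP mt) expr0 dvd1p.
have dP : 'X^(m - t.+1) %| P`_t.+1 by apply: IHd; lia.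
have := vPh t.+1; rewrite mulrBr coefB coefMX /= mulrC coefCM subSS => dPh.
rewrite -(subrK (h * P`_t.+1) P`_t) dvdp_add //.
by rewrite (_ : (m - t = 1 + (m - t.+1))%N) 1?exprD ?expr1 ?dvdp_mul //; lia.
Qed.

Lemma vanish0_horner m Q h : vanish0 m Q -> 'X %| h -> 'X^m %| Q.[h].
Proof.
move=> vQ dh; rewrite horner_coef; apply: dvdp_sum => i _.
apply: dvdp_trans (dvdp_mul (vQ i) (dvdp_exp2r i dh)).
by rewrite -exprD dvdp_exp2l //; lia.
Qed.

End VanishAtOrigin.

Section Shift.
Variable F : finFieldType.
Local Notation P2 := {poly {poly F}}.
Implicit Types P Q : P2.

Lemma no_low_monomialsE m Q : no_low_monomials m Q <-> vanish0 m Q.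
Proof.
split=> vQ t; first by apply/dvdp_XnP => j jm; apply: vQ; lia.
by move=> j tj; apply: (dvdp_XnP _ _ (vQ t)); lia.
Qed.

Section Morphism.
Variables a b : F.

Lemma shiftXYB P Q : shiftXY a b (P - Q) = shiftXY a b P - shiftXY a b Q.
Proof. by rewrite /shiftXY !rmorphB. Qed.

Lemma shiftXYM P Q : shiftXY a b (P * Q) = shiftXY a b P * shiftXY a b Q.
Proof. by rewrite /shiftXY !rmorphM. Qed.

Lemma shiftXYXn Q e : shiftXY a b (Q ^+ e) = shiftXY a b Q ^+ e.
Proof. by rewrite /shiftXY !rmorphXn. Qed.

Lemma shiftXY_C c : shiftXY a b c%:P = (c \Po ('X + a%:P))%:P.
Proof. by rewrite /shiftXY comp_polyC map_polyC. Qed.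

Lemma shiftXY_XsubC (R : {poly F}) :
  shiftXY a b ('X - R%:P) = 'X - (R \Po ('X + a%:P) - b%:P)%:P.
Proof.
rewrite shiftXYB shiftXY_C /shiftXY comp_polyX rmorphD /= map_polyX map_polyC /=.
by rewrite (comp_polyC b) polyCB opprB addrA.
Qed.

End Morphism.

Lemma horner_shiftXY (a b : F) (R : {poly F}) Q :
  (shiftXY a b Q).[R \Po ('X + a%:P) - b%:P] = Q.[R] \Po ('X + a%:P).
Proof.
have -> : R \Po ('X + a%:P) - b%:P = (R - b%:P) \Po ('X + a%:P).
  by rewrite rmorphB /= comp_polyC.
rewrite /shiftXY horner_map /= horner_comp.
by rewrite hornerD hornerX hornerC subrK.
Qed.

End Shift.

Section MonicTop.
Variable R : nzRingType.

Lemma Xn_mul_XsubC_exp_monic (c : R) a b : 'X^a * ('X - c%:P) ^+ b \is monic.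
Proof. by rewrite monicMl ?monicXn ?monic_exp ?monicXsubC. Qed.

Lemma size_Xn_mul_XsubC_exp (c : R) a b : size ('X^a * ('X - c%:P) ^+ b) = (a + b).+1.
Proof.
rewrite size_monicM ?monicXn ?monic_neq0 ?monic_exp ?monicXsubC //.
by rewrite size_polyXn size_exp_XsubC addnS.
Qed.

Lemma size_sub_topCM (p q : {poly R}) m : (size p <= m.+1)%N ->
  q \is monic -> size q = m.+1 -> (size (p - (p`_m)%:P * q)%R <= m)%N.
Proof.
move=> pm /monicP q1 qm; have qm1 : q`_m = 1 by rewrite -q1 lead_coefE qm.
apply/leq_sizeP => j; rewrite leq_eqVlt coefB coefCM.
case/orP=> [/eqP<-|mj]; first by rewrite qm1 mulr1 subrr.
have qj : (size q <= j)%N by rewrite qm.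
by rewrite (nth_default 0 qj) (nth_default 0 (leq_trans pm mj)) mulr0 subr0.
Qed.

End MonicTop.

Section CompScaleX.
Variable R : comNzRingType.

Lemma coef_comp_CX (c : R) (Q : {poly R}) t : (Q \Po (c%:P * 'X))`_t = Q`_t * c ^+ t.
Proof.
elim/poly_ind: Q t => [|Q a IHQ] t; first by rewrite comp_poly0 !coef0 mul0r.
rewrite comp_poly_MXaddC !coefD !coefC mulrA !coefMX.
case: t => [|t] /=; first by rewrite !add0r expr0 mulr1.
by rewrite !addr0 coefMC IHQ exprS -mulrA [c * _]mulrC.
Qed.

End CompScaleX.

Section Bases.
Variable F : finFieldType.
Local Notation P2 := {poly {poly F}}.
Implicit Type P : P2 -> Prop.

Lemma is_basis_neq0 P m (b : 'I_m -> P2) i : is_basis P b -> b i != 0.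
Proof.
case=> _ b_indep _; apply/eqP => bi0.
have := b_indep (fun j => (j == i)%:R); rewrite (bigD1 i) //= eqxx mul1r bi0 add0r.
rewrite big1 => [/(_ erefl i)|j /negPf->]; last by rewrite mul0r.
by rewrite eqxx => /eqP; rewrite oner_eq0.
Qed.

Lemma is_basis_mulr P m (b : 'I_m -> P2) f : f != 0 -> is_basis P b ->
  is_basis (fun Q => exists2 Q', P Q' & Q = Q' * f) (fun i => b i * f).
Proof.
move=> f0 [Pb b_indep b_span]; split=> [i|c|_ [Q' /b_span[c ->] ->]].
- by exists (b i).
- under eq_bigr do rewrite mulrA; rewrite -mulr_suml => /eqP.
  by rewrite mulf_eq0 (negPf f0) orbF => /eqP; apply: b_indep.
- by exists c; rewrite mulr_suml; apply: eq_bigr => i _; rewrite mulrA.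
Qed.

Lemma is_basis_insert P (P' : P2 -> Prop) m (b : 'I_m -> P2)
    (j : 'I_m.+1) (b' : 'I_m.+1 -> P2) :
  is_basis P b -> (forall i, b' (lift j i) = b i) ->
  P' (b' j) -> (forall Q, P Q -> P' Q) ->
  (forall c (d : 'I_m -> {poly F}), c%:P * b' j = \sum_i (d i)%:P * b i -> c = 0) ->
  (forall Q, P' Q -> exists c, P (Q - c%:P * b' j)) ->
  is_basis P' b'.
Proof.
move=> [Pb b_indep b_span] b'E P'bj PP' bj_indep P'_span.
have sumE (c : 'I_m.+1 -> {poly F}) : \sum_i (c i)%:P * b' i =
    (c j)%:P * b' j + \sum_(i < m) (c (lift j i))%:P * b i.
  by rewrite (bigD1_ord j) //=; congr (_ + _); apply: eq_bigr => i _; rewrite b'E.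
split=> [i|c|Q /P'_span[cj /b_span[d]]].
- by case: (unliftP j i) => [i' ->|->]; rewrite ?b'E; [apply/PP'/Pb|].
- rewrite sumE => /eqP; rewrite addr_eq0 => /eqP cjE.
  have cj0 : c j = 0.
    apply: (bj_indep _ (fun i => - c (lift j i))); rewrite cjE -sumrN.
    by apply: eq_bigr => i _; rewrite polyCN mulNr.
  move: cjE; rewrite cj0 mul0r => /esym/eqP; rewrite oppr_eq0 => /eqP /b_indep c0.
  by move=> i; case: (unliftP j i) => [i' ->|->].
- move/eqP; rewrite subr_eq => /eqP QE.
  exists (fun i => if unlift j i is Some i' then d i' else cj).
  by rewrite sumE unlift_none addrC QE; congr (_ + _); apply: eq_bigr => i _; rewrite liftK.
Qed.

End Bases.

Section WeakPopov.
Variable F : finFieldType.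
Local Notation P2 := {poly {poly F}}.

Lemma wdeg_ge (Q : P2) t : Q`_t != 0 -> (size Q`_t)%:Z - 1 - t%:Z <= wdeg Q.
Proof.
move=> Qt; have tQ : (t < size Q)%N.
  by rewrite ltnNge; apply: contra Qt => /(nth_default 0) ->.
exact: (@le_bigmax_cond _ _ _ _ (Ordinal tQ)).
Qed.

Lemma wdeg_attained (Q : P2) : Q != 0 ->
  exists2 t, Q`_t != 0 & wdeg Q = (size Q`_t)%:Z - 1 - t%:Z.
Proof.
move=> Q0; have top : ((size Q).-1 < size Q)%N by rewrite prednK ?size_poly_gt0.
have Qtop : Q`_(Ordinal top) != 0 by rewrite /= -lead_coefE lead_coef_eq0.
have lower (j : 'I_(size Q)) : Q`_j != 0 -> - (size Q)%:Z <= (size Q`_j)%:Z - 1 - j%:Z.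
  by move=> _; have := ltn_ord j; lia.
have [j Qj wE] := @Order.TotalTheory.eq_bigmax _ _ _ (- (size Q)%:Z) _
  (fun j : 'I_(size Q) => Q`_j != 0)
  (fun j : 'I_(size Q) => (size Q`_j)%:Z - 1 - j%:Z) Qtop lower.
by exists j; rewrite // /wdeg wE.
Qed.

Lemma coef_rowpoly m m' (B : 'M[{poly F}]_(m, m')) i (j : 'I_m') :
  (rowpoly B i)`_j = B i j.
Proof.
rewrite /rowpoly coef_sum (bigD1 j) //= coefCM coefXn eqxx mulr1 big1 ?addr0 // => t tj.
by rewrite coefCM coefXn val_eqE eq_sym (negbTE tj) mulr0.
Qed.

Lemma size_rowpoly m m' (B : 'M[{poly F}]_(m, m')) i : (size (rowpoly B i) <= m')%N.
Proof.
apply/leq_sizeP => j mj; rewrite coef_sum big1 // => t _.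
rewrite coefCM coefXn; case: eqP => [jt|_]; last by rewrite mulr0.
by move: mj; rewrite jt leqNgt ltn_ord.
Qed.

Lemma rowpoly_coef_lt m m' (B : 'M[{poly F}]_(m, m')) i t :
  (rowpoly B i)`_t != 0 -> (t < m')%N.
Proof.
by rewrite ltnNge; apply: contra => mt; rewrite nth_default // (leq_trans (size_rowpoly _ _)).
Qed.

Lemma mulWbarE m l (B : 'M[{poly F}]_(m, l.+1)) i j :
  (B *m Wbar F l) i j = B i j * 'X^(l - j).
Proof. by rewrite mul_mx_diag !mxE. Qed.

Lemma rowdeg_mulWbar m l (B : 'M[{poly F}]_(m, l.+1)) i : rowpoly B i != 0 ->
  (rowdeg (B *m Wbar F l) i)%:Z = wdeg (rowpoly B i) + (l.+1)%:Z.
Proof.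
move=> r0; have [t rt wE] := wdeg_attained r0; rewrite wE.
have tl := rowpoly_coef_lt rt.
have rowE := coef_rowpoly B i.
suff -> : rowdeg (B *m Wbar F l) i = (size ((rowpoly B i)`_t)%R + (l - t))%N by lia.
apply/eqP; rewrite eqn_leq; apply/andP; split.
  apply/bigmax_leqP => j _; rewrite mulWbarE.
  have [->|Bj] := eqVneq (B i j) 0; first by rewrite mul0r size_poly0.
  have := wdeg_ge (Q := rowpoly B i) (t := j); rewrite wE rowE size_mulXn // => /(_ Bj).
  by have := ltn_ord j; lia.
have Bt : B i (Ordinal tl) != 0 by rewrite -rowE.
rewrite /rowdeg (leq_trans _ (leq_bigmax (Ordinal tl))) //.
by rewrite mulWbarE size_mulXn // -rowE addnC.
Qed.

Lemma LP_spec m m' (A : 'M[{poly F}]_(m, m'.+1)) i :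
  exists jL : 'I_m'.+1, [/\ LP A i = jL, size (A i jL) = rowdeg A i
    & forall j : 'I_m'.+1, (jL < j)%N -> (size (A i j) < rowdeg A i)%N].
Proof.
have [j1 _ j1_max] := @arg_maxnP _ ord0 xpredT (fun j => size (A i j)) isT.
have rowdegE : rowdeg A i = size (A i j1).
  by apply/eqP; rewrite eqn_leq leq_bigmax andbT; apply/bigmax_leqP => j _; apply: j1_max.
pose P j := size (A i j) == rowdeg A i.
have [jL PjL jL_max] := @arg_maxnP _ j1 P val (introT eqP (esym rowdegE)).
have LPE : LP A i = jL.
  by apply/eqP; rewrite eqn_leq (leq_bigmax_cond _ PjL) andbT; apply/bigmax_leqP.
exists jL; split=> // [|j ltj]; first exact/eqP.
rewrite ltn_neqAle leq_bigmax andbT; apply: contraTneq ltj => Pj.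
by rewrite -leqNgt; apply: jL_max; apply/eqP.
Qed.

(* Predictable degree property: among the rows of maximal [size c_i + deg A_i],
   the one with the rightmost leading position [p] alone reaches that degree in
   column [p], since weak Popov form makes the leading positions distinct. *)
Lemma weak_popov_size_comb m m' (A : 'M[{poly F}]_(m, m'.+1)) (c : 'I_m -> {poly F}) i1 :
  weak_popov A -> (forall i, (0 < rowdeg A i)%N) -> c i1 != 0 ->
  exists i0 (j : 'I_m'.+1), c i0 != 0 /\
    size (\sum_i c i * A i j) = (size (c i0) + rowdeg A i0).-1.
Proof.
move=> wp rowdeg_gt0 ci1.
pose E i := if c i == 0 then 0%N else (size (c i) + rowdeg A i)%N.
have [ie _ E_max] := @arg_maxnP _ i1 xpredT E isT.
have [iS /eqP EiS LP_max] := @arg_maxnP _ ie (fun i => E i == E ie) (LP A) (eqxx _).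
have E_gt0 : (0 < E ie)%N.
  by apply: leq_trans (E_max i1 isT); rewrite /E (negPf ci1) addn_gt0 rowdeg_gt0 orbT.
have ciS : c iS != 0 by apply: contraTneq E_gt0 => ciS0; rewrite -EiS /E ciS0 eqxx.
have [p [LPp sizep p_last]] := LP_spec A iS.
exists iS, p; split=> //.
have N_gt0 : (0 < (size (c iS) + rowdeg A iS).-1)%N.
  by have := rowdeg_gt0 iS; rewrite -size_poly_gt0 in ciS; lia.
have other i : i != iS -> (size (c i * A i p)%R < (size (c iS) + rowdeg A iS).-1)%N.
  move=> iiS; have [->|ci] := eqVneq (c i) 0; first by rewrite mul0r size_poly0.
  apply: leq_ltn_trans (size_polyMleq _ _) _.
  have Aip : (size (A i p) <= rowdeg A i)%N by rewrite /rowdeg; exact: leq_bigmax.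
  have EiE : (E i == E iS) = (size (c i) + rowdeg A i == size (c iS) + rowdeg A iS)%N.
    by rewrite /E (negPf ci) (negPf ciS).
  have Ei_le : (size (c i) + rowdeg A i <= size (c iS) + rowdeg A iS)%N.
    by have := E_max i isT; rewrite -EiS /E (negPf ci) (negPf ciS).
  rewrite -size_poly_gt0 in ci; case: (boolP (E i == E iS)) => Eeq; last first.
    by move: Eeq; rewrite EiE => /eqP; lia.
  have LPi : (LP A i < p)%N.
    rewrite ltn_neqAle -LPp; apply/andP; split; last by apply: LP_max; rewrite -EiS.
    by apply: contra iiS => /eqP /wp ->.
  have [jL [LPi' _ jL_last]] := LP_spec A i; have := jL_last p; rewrite -LPi' => /(_ LPi).
  by move: Eeq; rewrite EiE => /eqP; lia.
have AiSp : A iS p != 0 by rewrite -size_poly_gt0 sizep.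
rewrite (bigD1 iS) //= size_polyDl size_mul ?sizep //.
apply: (big_ind (fun q : {poly F} => (size q < _)%N)) => [|x y|i /other]; rewrite ?size_poly0 //.
by move=> sx sy; apply: leq_ltn_trans (size_polyD _ _) _; rewrite gtn_max sx sy.
Qed.

Lemma weak_popov_basis_min_wdeg l (Mod : P2 -> Prop) (B : 'M[{poly F}]_l.+1) :
  is_basis Mod (rowpoly B) -> weak_popov (B *m Wbar F l) ->
  exists i, forall Q, Mod Q -> Q != 0 -> wdeg (rowpoly B i) <= wdeg Q.
Proof.
move=> B_basis wp; set A := B *m Wbar F l.
have rowdegE i : (rowdeg A i)%:Z = wdeg (rowpoly B i) + (l.+1)%:Z.
  exact/rowdeg_mulWbar/(is_basis_neq0 i B_basis).
have rowdeg_gt0 i : (0 < rowdeg A i)%N.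
  have [t rt wE] := wdeg_attained (is_basis_neq0 i B_basis).
  have := rowdegE i; rewrite wE; have := rowpoly_coef_lt rt.
  by rewrite -size_poly_gt0 in rt; lia.
have [i1 _ i1_min] := @arg_minnP _ ord0 xpredT (rowdeg A) isT.
exists i1 => Q ModQ Q0; case: B_basis => _ _ /(_ Q ModQ) [c QE].
have [i2 ci2] : exists i, c i != 0.
  apply/existsP; apply: contraR Q0 => /existsPn c0; rewrite QE big1 // => i _.
  by rewrite (eqP (negPn (c0 i))) mul0r.
have [i0 [p [ci0 sizeE]]] := weak_popov_size_comb wp rowdeg_gt0 ci2.
have colE : \sum_i c i * A i p = Q`_p * 'X^(l - p).
  rewrite QE coef_sum mulr_suml; apply: eq_bigr => i _.
  by rewrite coefCM coef_rowpoly mulWbarE mulrA.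
rewrite colE -/A in sizeE; have i0_gt0 := rowdeg_gt0 i0; have i1_le := i1_min i0 isT.
rewrite -size_poly_gt0 in ci0; have [Qp0|Qp] := eqVneq Q`_p 0.
  by rewrite Qp0 mul0r size_poly0 in sizeE; lia.
rewrite size_mulXn // in sizeE; have := wdeg_ge Qp; have := rowdegE i1.
by have := ltn_ord p; lia.
Qed.

End WeakPopov.

Section MultiplicityModule.
Variable F : finFieldType.
Local Notation P2 := {poly {poly F}}.
Variables (n k : nat) (alpha rp : 'I_n -> F) (R : {poly F}).
Implicit Types P Q : P2.
Hypothesis alpha_inj : injective alpha.
Hypothesis rp0 : forall i : 'I_n, (i < k)%N -> rp i = 0.
Hypothesis R_interp : forall i, R.[alpha i] = rp i.

Local Notation L := (Lpoly k alpha).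
Local Notation G := (Gpoly alpha).
Local Notation M := (inM alpha rp).
Local Notation shift i := (shiftXY (alpha i) (rp i)).
Local Notation phiM := (inPhiM k alpha rp).

Lemma Lpoly_neq0 : L != 0.
Proof. exact/monic_neq0/monic_prod_XsubC. Qed.

Lemma Lpoly_dvd_Gpoly : L %| G.
Proof. by rewrite /Gpoly (bigID (fun i : 'I_n => (i < k)%N)) dvdp_mulIl. Qed.

Lemma Lpoly_dvd_R : L %| R.
Proof.
rewrite -[L]expr1; apply: prod_XsubC_exp_dvdp => // i ik.
by rewrite expr1 dvdp_XsubCl; apply/rootP; rewrite R_interp rp0.
Qed.

Lemma X_dvd_Gpoly_shift i : 'X %| G \Po ('X + (alpha i)%:P).
Proof.
rewrite -[X in X %| _]subr0 dvdp_XsubCl /root horner_comp hornerD hornerX hornerC.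
by rewrite add0r /Gpoly horner_prod (bigD1 i) //= hornerXsubC subrr mul0r.
Qed.

Lemma X_dvd_R_shift i : 'X %| R \Po ('X + (alpha i)%:P) - (rp i)%:P.
Proof.
rewrite -[X in X %| _]subr0 dvdp_XsubCl /root hornerD hornerN hornerC horner_comp.
by rewrite hornerD hornerX hornerC add0r R_interp subrr.
Qed.

Lemma inM_vanish0 s l Q : M s l Q -> forall i, vanish0 s (shift i Q).
Proof. by case=> _ vQ i; apply/no_low_monomialsE. Qed.

Lemma inM_intro s l Q : (size Q <= l.+1)%N ->
  (forall i, vanish0 s (shift i Q)) -> M s l Q.
Proof. by move=> Ql vQ; split=> // i; apply/no_low_monomialsE. Qed.

Lemma inM_widen s l l' Q : (l <= l')%N -> M s l Q -> M s l' Q.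
Proof. by move=> ll' [Ql vQ]; split=> //; rewrite (leq_trans Ql) ?ltnS. Qed.

Lemma inM_subCM s l l' P Q c : M s l' P -> M s l' Q ->
  (size (P - c%:P * Q)%R <= l.+1)%N -> M s l (P - c%:P * Q).
Proof.
move=> MP MQ PQl; apply: inM_intro => // i.
rewrite shiftXYB shiftXYM shiftXY_C.
by apply/vanish0D/vanish0N/vanish0CM; apply: inM_vanish0; [apply: MP | apply: MQ].
Qed.

Lemma inM_Xn_XsubR s l : (s <= l)%N ->
  M s l.+1 ('X ^+ (l - s).+1 * ('X - R%:P) ^+ s).
Proof.
move=> sl; apply: inM_intro.
  by rewrite size_Xn_mul_XsubC_exp; lia.
move=> i; rewrite shiftXYM !shiftXYXn shiftXY_XsubC.
have := vanish0M (vanish0_0 (shiftXY (alpha i) (rp i) 'X ^+ (l - s).+1))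
  (vanish0X s (vanish0_XsubC (X_dvd_R_shift i))).
by rewrite add0n mul1n.
Qed.

Lemma inM_GpolyC s l : M s.+1 l.+1 ((G ^+ s.+1)%:P).
Proof.
apply: inM_intro => [|i]; first exact: leq_trans (size_polyC_leq1 _) _.
by rewrite shiftXY_C; apply: vanish0C; rewrite rmorphXn dvdp_exp2r ?X_dvd_Gpoly_shift.
Qed.

Lemma inM_mul_XsubR s l Q : M s l Q -> M s.+1 l.+1 (Q * ('X - R%:P)).
Proof.
move=> MQ; apply: inM_intro => [|i].
  by case: MQ => Ql _; apply: leq_trans (size_polyMleq _ _) _; rewrite size_XsubC; lia.
rewrite shiftXYM shiftXY_XsubC -addn1.
by apply/vanish0M/vanish0_XsubC/X_dvd_R_shift; apply: inM_vanish0 MQ i.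
Qed.

Lemma inM_divXsubR s l Q : M s.+1 l.+1 Q ->
  exists2 Q', M s l Q' & G ^+ s.+1 %| Q.[R] /\ Q = (Q.[R])%:P + Q' * ('X - R%:P).
Proof.
move=> MQ.
have [Q' Q'E] : exists Q', Q - (Q.[R])%:P = Q' * ('X - R%:P).
  by apply/factor_theorem; rewrite /root hornerD hornerN hornerC subrr.
have QR_shift i : 'X ^+ s.+1 %| Q.[R] \Po ('X + (alpha i)%:P).
  rewrite -(horner_shiftXY _ (rp i)); apply: vanish0_horner (X_dvd_R_shift i).
  exact: inM_vanish0 MQ i.
exists Q'; last split; last by rewrite -Q'E addrC subrK.
- apply: inM_intro => [|i].
    have [->|Q'0] := eqVneq Q' 0; first by rewrite size_poly0.
    have : (size (Q' * ('X - R%:P))%R <= l.+2)%N.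
      case: MQ => Ql _; rewrite -Q'E (leq_trans (size_polyD _ _)) //.
      by rewrite size_polyN geq_max Ql (leq_trans (size_polyC_leq1 _)).
    by rewrite size_Mmonic ?monicXsubC // size_XsubC; lia.
  apply: (vanish0_divXsubC (X_dvd_R_shift i)).
  rewrite -shiftXY_XsubC -shiftXYM -Q'E shiftXYB shiftXY_C.
  by apply/vanish0D/vanish0N/vanish0C/QR_shift; apply: inM_vanish0 MQ i.
- apply: (@prod_XsubC_exp_dvdp _ _ xpredT) => // i _.
  have := dvdp_comp_poly ('X - (alpha i)%:P) (QR_shift i).
  by rewrite comp_polyXaddC_K comp_Xn_poly.
Qed.

Lemma Lpoly_exp_dvd_coef s l Q t : M s l Q -> L ^+ s %| Q`_t * L ^+ t.
Proof.
move=> MQ; have [st|ts] := leqP s t; first by rewrite dvdp_mull ?dvdp_exp2l.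
rewrite -(subnK (ltnW ts)) exprD dvdp_mul //; apply: prod_XsubC_exp_dvdp => // i ik.
have := inM_vanish0 MQ i t; rewrite /shiftXY rp0 // !raddf0 addr0 comp_polyXr coef_map /=.
move/(dvdp_comp_poly ('X - (alpha i)%:P)).
by rewrite comp_polyXaddC_K comp_Xn_poly.
Qed.

Lemma phiE s l Q : M s l Q -> (L ^+ s)%:P * phi L s Q = Q \Po (L%:P * 'X).
Proof.
move=> MQ; apply/polyP => t; rewrite coefCM coef_comp_CX coef_poly.
case: ltnP => tQ; first by rewrite divpKC // (Lpoly_exp_dvd_coef t MQ).
by rewrite nth_default // mul0r mulr0.
Qed.

Lemma Lpoly_expC_neq0 s : (L ^+ s)%:P != 0 :> P2.
Proof. by rewrite polyC_eq0 expf_neq0 ?Lpoly_neq0. Qed.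

Lemma inPhiME s l P : phiM s l P <->
  exists2 Q, M s l Q & (L ^+ s)%:P * P = Q \Po (L%:P * 'X).
Proof.
split=> [[Q [MQ ->]]|[Q MQ PE]]; exists Q => //; first exact: phiE MQ.
by split=> //; apply: (mulfI (Lpoly_expC_neq0 s)); rewrite PE (phiE MQ).
Qed.

Lemma inPhiM_size s l P : phiM s l P -> (size P <= l.+1)%N.
Proof. by case=> Q [[Ql _] ->]; apply: leq_trans (size_poly _ _) Ql. Qed.

Lemma comp_CX_XsubR : ('X - R%:P) \Po (L%:P * 'X) = L%:P * ('X - (R %/ L)%:P).
Proof.
rewrite rmorphB /= comp_polyX comp_polyC -{1}(divpK Lpoly_dvd_R) polyCM mulrBr.
by rewrite [_ * L%:P]mulrC.
Qed.

Lemma phiM_basis_succl s l (b : 'I_l.+1 -> P2) : (s <= l)%N -> is_basis (phiM s l) b ->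
  is_basis (phiM s l.+1) (fun i : 'I_l.+2 => if (i < l.+1)%N then b (inord i)
    else (L%:P * 'X) ^+ (l - s).+1 * ('X - (R %/ L)%:P) ^+ s).
Proof.
move=> sl b_basis; set e := (L%:P * 'X) ^+ _ * _.
pose Q0 : P2 := 'X ^+ (l - s).+1 * ('X - R%:P) ^+ s.
have Q0E : Q0 \Po (L%:P * 'X) = (L ^+ s)%:P * e.
  rewrite /Q0 rmorphM !rmorphXn /= comp_polyX comp_CX_XsubR.
  by rewrite [(L%:P * _) ^+ s]exprMn mulrCA.
have size_Q0 : size Q0 = l.+2 by rewrite size_Xn_mul_XsubC_exp; lia.
have e_top : e`_l.+1 = L ^+ (l - s).+1.
  rewrite /e exprMn -mulrA -rmorphXn coefCM.
  have /monicP := Xn_mul_XsubC_exp_monic (R %/ L) (l - s).+1 s.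
  rewrite lead_coefE size_Xn_mul_XsubC_exp /= (_ : (l - s).+1 + s = l.+1)%N; last lia.
  by move->; rewrite mulr1.
apply: (is_basis_insert (j := ord_max) b_basis) => [i||Q|c d|Q].
- by rewrite lift_max ltn_ord inord_val.
- rewrite /= ltnn; apply/inPhiME; exists Q0; last by rewrite Q0E.
  exact: inM_Xn_XsubR.
- by case/inPhiME => Q' MQ' QE; apply/inPhiME; exists Q'; first exact: inM_widen MQ'.
- rewrite /= ltnn => /(congr1 (coefp l.+1)); rewrite /= coefCM e_top coef_sum big1.
    by move/eqP; rewrite mulf_eq0 expf_eq0 (negPf Lpoly_neq0) andbF orbF => /eqP.
  by move=> i _; rewrite coefCM nth_default ?mulr0 //; case: b_basis => /(_ i) /inPhiM_size.
- rewrite /= ltnn => /inPhiME[Q' MQ' QE]; exists Q'`_l.+1.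
  have MQ0 : M s l.+1 Q0 by exact: inM_Xn_XsubR.
  apply/inPhiME; exists (Q' - (Q'`_l.+1)%:P * Q0).
    apply: (inM_subCM MQ' MQ0); apply: size_sub_topCM => //; first by case: MQ'.
    exact: Xn_mul_XsubC_exp_monic.
  by rewrite rmorphB rmorphM /= comp_polyC Q0E -QE mulrBr mulrCA.
Qed.

Lemma inPhiM_mul_XsubRb s l P : phiM s l P -> phiM s.+1 l.+1 (P * ('X - (R %/ L)%:P)).
Proof.
case/inPhiME => Q MQ QE; apply/inPhiME; exists (Q * ('X - R%:P)); first exact: inM_mul_XsubR.
by rewrite rmorphM /= -QE comp_CX_XsubR exprSr polyCM; ring.
Qed.

Lemma phiM_basis_succ s l (b : 'I_l.+1 -> P2) : is_basis (phiM s l) b ->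
  is_basis (phiM s.+1 l.+1) (fun i : 'I_l.+2 => if (i == 0 :> nat)
    then ((G %/ L) ^+ s.+1)%:P else b (inord i.-1) * ('X - (R %/ L)%:P)).
Proof.
move=> b_basis; have GbL : G %/ L * L = G := divpK Lpoly_dvd_Gpoly.
have Gb_neq0 : G %/ L != 0.
  have G_neq0 : G != 0 := monic_neq0 (monic_prod_XsubC _ _ _).
  by apply: contra_neq G_neq0 => Gb0; rewrite -GbL Gb0 mul0r.
have XRb_neq0 : 'X - (R %/ L)%:P != 0 :> P2 by rewrite polyXsubC_eq0.
apply: (is_basis_insert (j := ord0) (is_basis_mulr XRb_neq0 b_basis))
  => [i||Q [Q' /inPhiM_mul_XsubRb phiMQ ->] //|c d|Q].
- by rewrite lift0 /= inord_val.
- apply/inPhiME; exists ((G ^+ s.+1)%:P); first exact: inM_GpolyC.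
  by rewrite comp_polyC -polyCM -exprMn [L * _]mulrC GbL.
- move/(congr1 (fun p : P2 => p.[R %/ L])); rewrite /= -polyCM hornerC horner_sum.
  rewrite big1 => [/eqP|i _]; last by rewrite hornerCM hornerM hornerXsubC subrr !mulr0.
  by rewrite mulf_eq0 expf_eq0 (negPf Gb_neq0) andbF orbF => /eqP.
- case/inPhiME => Q' MQ' QE; have [Q1 MQ1 [/dvdpP[g gE] Q'E]] := inM_divXsubR MQ'.
  exists g; exists (phi L s Q1); first by exists Q1.
  apply: (mulfI (Lpoly_expC_neq0 s.+1)); rewrite /= mulrBr QE Q'E rmorphD /= comp_polyC.
  rewrite rmorphM /= comp_CX_XsubR -(phiE MQ1) gE.
  have -> : g * G ^+ s.+1 = g * (G %/ L) ^+ s.+1 * L ^+ s.+1 by rewrite -mulrA -exprMn GbL.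
  by rewrite ![L ^+ s.+1]exprSr !polyCM; ring.
Qed.

End MultiplicityModule.

Theorem lemma13 (F : finFieldType) (n k : nat)
  (hk : (0 < k)%N) (hkn : (k < n)%N) (hnq : (n < #|F|)%N)
  (alpha : 'I_n -> F) (alpha_inj : injective alpha)
  (alpha_nz : forall i, alpha i != 0)
  (w : 'I_n -> F) (w_nz : forall i, w i != 0)
  (r : 'I_n -> F) (r_zero : forall i : 'I_n, (i < k)%N -> r i = 0)
  (R : {poly F}) (R_size : (size R <= n)%N)
  (R_interp : forall i : 'I_n, R.[alpha i] = r i / w i)
  (s l : nat) (hs : (0 < s)%N) (hsl : (s <= l)%N) :
  let rp := fun i : 'I_n => r i / w i in
  let L := Lpoly k alpha in
  let Gb := Gpoly alpha %/ L in
  let Rb := R %/ L in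
  (forall B : 'M[{poly F}]_l.+1,
     is_basis (inPhiM k alpha rp s l) (rowpoly B) ->
     weak_popov (B *m Wbar F l) ->
     exists i : 'I_l.+1,
       forall Q, inPhiM k alpha rp s l Q -> Q != 0 ->
         wdeg (rowpoly B i) <= wdeg Q)
  /\
  (forall b : 'I_l.+1 -> {poly {poly F}},
     is_basis (inPhiM k alpha rp s l) b ->
     is_basis (inPhiM k alpha rp s l.+1)
       (fun i : 'I_l.+2 =>
          if (i < l.+1)%N then b (inord i)
          else (L%:P * 'X) ^+ (l - s).+1 * ('X - Rb%:P) ^+ s)
     /\
     is_basis (inPhiM k alpha rp s.+1 l.+1)
       (fun i : 'I_l.+2 =>
          if (i == 0 :> nat) then (Gb ^+ s.+1)%:P
          else b (inord i.-1) * ('X - Rb%:P))).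
Proof.
move=> rp L Gb Rb.
have rp0 (i : 'I_n) : (i < k)%N -> rp i = 0 by move=> ik; rewrite /rp r_zero ?mul0r.
have R_rp (i : 'I_n) : R.[alpha i] = rp i by [].
split; first by move=> B; apply: weak_popov_basis_min_wdeg.
move=> b b_basis; split.
  by have := phiM_basis_succl alpha_inj rp0 R_rp hsl b_basis.
by have := phiM_basis_succ alpha_inj rp0 R_rp b_basis.
Qed.
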